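(* $S^{(1)}(\beta)=0$ if and only if \[ \begin{cases} K(\chi)-K(\rho\chi)\equiv 0\pmod{4\mathcal{P}} & \text{if } q\equiv 1\pmod 4,\\ 2+K(\chi)+K(\rho\chi)\equiv 0\pmod{4\mathcal{P}} & \text{if } q\equiv 3\pmod 4, \end{cases} \] where the congruences are modulo the ideal $4\mathcal{P}$ of $\mathbb{Z}[\zeta_k]$.
   Context: Let $p$ be an odd prime, $m\ge1$, $q=p^m$, $\alpha$ a primitive element of $\mathbb{F}_q$, and $T=q-1$. The binary SLCE sequence $(s_n)_{n\ge0}$ is defined as follows: $s_n=1$ if $\alpha^n+1$ is a nonzero non-square of $\mathbb{F}_q$, and $s_n=0$ otherwise. Put $S(X)=\sum_{n=0}^{T-1}s_nX^n\in\mathbb{F}_2[X]$. For an integer $t\ge0$, the $t$-th Hasse derivative is $S^{(t)}(X)=\sum_{n=t}^{T-1}\binom{n}{t}s_nX^{n-t}$, with coefficients reduced mod $2$. Let $\beta$ be an element of an algebraic closure of $\mathbb{F}_2$ with $\beta^T=1$ and multiplicative order $k>1$ (so $k$ is odd). Let $f$ be the order of $2$ modulo $k$, and write $\zeta_N=e^{2\pi i/N}$. Let $\mathcal{P}$ be a prime ideal of $\mathbb{Z}[\zeta_k]$ containing $2$. Fix a field isomorphism $\phi:\mathbb{F}_2(\beta)=\mathbb{F}_{2^f}\to\mathbb{Z}[\zeta_k]/\mathcal{P}$, and let $\zeta$ be the unique complex $k$-th root of unity with $\phi(\beta)=\zeta+\mathcal{P}$. Multiplicative characters of $\mathbb{F}_q$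 are homomorphisms $\mathbb{F}_q^*\to\mathbb{C}^*$, extended by value $0$ at $0$. Let $\rho$ be the quadratic character. Let $\chi$ be the character with $\chi(\alpha^n)=\zeta^n$. For a character $\psi$, set $K(\psi)=\sum_{x\in\mathbb{F}_q}\rho(x)\psi(1-x)$. *)

From HB Require Import structures.
From mathcomp Require Import all_boot all_order all_algebra all_field.
Set Implicit Arguments. Unset Strict Implicit. Unset Printing Implicit Defensive.
Import Order.TTheory GRing.Theory Num.Theory.
Local Open Scope ring_scope.

Definition slce (F : finFieldType) (alpha : F) (n : nat) : bool :=
  (alpha ^+ n + 1 != 0) && ~~ [exists y : F, y ^+ 2 == alpha ^+ n + 1].

(* S(X) = sum_{n<T} s_n X^n, with T = q - 1, coefficients taken in a field L of
   characteristic 2 (the image of F_2[X] in L[X]). *)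
Definition slcePoly (F : finFieldType) (alpha : F) (L : fieldType) : {poly L} :=
  \poly_(n < #|F|.-1) (slce alpha n)%:R.

Definition hasse (L : fieldType) (p : {poly L}) (t : nat) : {poly L} := p^`N(t).

Definition rho (F : finFieldType) (x : F) : algC :=
  if x == 0 then 0 else if [exists y : F, y ^+ 2 == x] then 1 else -1.

Definition chi (F : finFieldType) (alpha : F) (zeta : algC) (x : F) : algC :=
  match [pick n : 'I_(#|F|.-1) | alpha ^+ n == x] with
  | Some n => zeta ^+ n
  | None => 0
  end.

Definition Ksum (F : finFieldType) (psi : F -> algC) : algC :=
  \sum_(x : F) rho x * psi (1 - x).

(* zeta_k = e^{2 pi i / k}  (k.-root (-1) = e^{i pi / k} in algC). *)
Definition zetaN (k : nat) : algC := (k.-root (-1)) ^+ 2.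

Definition Zzeta (k : nat) (x : algC) : Prop :=
  exists f : {poly int}, x = (map_poly (fun z : int => z%:~R) f).[zetaN k].

Definition is_ideal_in (R I : algC -> Prop) : Prop :=
  (forall x, I x -> R x) /\ I 0 /\
  (forall x y, I x -> I y -> I (x - y)) /\
  (forall r x, R r -> I x -> I (r * x)).

Definition is_prime_ideal_in (R I : algC -> Prop) : Prop :=
  is_ideal_in R I /\ ~ I 1 /\
  (forall a b, R a -> R b -> I (a * b) -> I a \/ I b).

Definition in4P (P : algC -> Prop) (x : algC) : Prop :=
  exists2 y, P y & x = 4 * y.

(* F_2(beta) inside a field L of characteristic 2: the subring generated by
   beta (which is a field since beta is algebraic over F_2). *)
Definition F2adj (L : fieldType) (beta : L) (x : L) : Prop :=
  exists f : {poly int}, x = (map_poly (fun z : int => z%:~R) f).[beta].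

(* phi : F_2(beta) -> Z[zeta_k]/P is a field isomorphism, where phi is given by
   a choice of representatives phi x in Z[zeta_k] of the cosets phi(x) + P. *)
Definition is_iso_to_quot (L : fieldType) (beta : L) (R P : algC -> Prop)
    (phi : L -> algC) : Prop :=
  (forall x, F2adj beta x -> R (phi x)) /\
      (forall x y, F2adj beta x -> F2adj beta y -> P (phi (x + y) - (phi x + phi y))) /\
      (forall x y, F2adj beta x -> F2adj beta y -> P (phi (x * y) - phi x * phi y)) /\
      P (phi 1 - 1) /\
      (forall x y, F2adj beta x -> F2adj beta y -> P (phi x - phi y) -> x = y) /\
    (forall z, R z -> exists2 x, F2adj beta x & P (z - phi x)).

From HB Require Import structures.
From mathcomp Require Import all_boot all_order all_algebra all_field.
From mathcomp Require Import zify ring.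
Set Implicit Arguments. Unset Strict Implicit. Unset Printing Implicit Defensive.
Import Order.TTheory GRing.Theory Num.Theory.
Local Open Scope ring_scope.

(* In characteristic 2 the derivative keeps exactly the odd exponents, so
   beta * S^(1)(beta) = sum of beta^n over the odd n with s_n = 1.  Through phi
   this vanishes iff A = sum of zeta^n over the same n lies in P.  For x = alpha^n,
   n is odd iff rho x = -1 and s_n = 1 iff rho (x + 1) = -1, so the indicator is
   (1 - rho x)(1 - rho (x + 1)) / 4, up to a correction at x = -1.  Since zeta has
   odd order, chi is even and sum chi = sum rho chi = 0, and one finds
   4 A = - K(chi) + rho(-1) K(rho chi) - (1 - rho(-1)),
   with rho(-1) = 1 iff q = 1 mod 4.  Finally A is in P iff 4 A is in 4P. *)

Section IntPolyClosure.
Variables (R : comNzRingType) (a : R).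

(* The subring Z[a]; [Zzeta k] and [F2adj beta] are [Zadj (zetaN k)] and [Zadj beta]. *)
Definition Zadj (x : R) : Prop :=
  exists f : {poly int}, x = (map_poly (fun z : int => z%:~R) f).[a].

Lemma Zadj0 : Zadj 0. Proof. by exists 0; rewrite rmorph0 horner0. Qed.
Lemma Zadj1 : Zadj 1. Proof. by exists 1; rewrite rmorph1 hornerC. Qed.
Lemma Zadj_gen : Zadj a. Proof. by exists 'X; rewrite map_polyX hornerX. Qed.

Lemma ZadjD x y : Zadj x -> Zadj y -> Zadj (x + y).
Proof. by move=> [f ->] [g ->]; exists (f + g); rewrite rmorphD hornerD. Qed.

Lemma ZadjB x y : Zadj x -> Zadj y -> Zadj (x - y).
Proof. by move=> [f ->] [g ->]; exists (f - g); rewrite rmorphB hornerD hornerN. Qed.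

Lemma ZadjM x y : Zadj x -> Zadj y -> Zadj (x * y).
Proof. by move=> [f ->] [g ->]; exists (f * g); rewrite rmorphM hornerM. Qed.

Lemma ZadjX x n : Zadj x -> Zadj (x ^+ n).
Proof. by move=> Zx; elim: n => [|n IHn]; rewrite ?expr0 ?exprS; [exact: Zadj1 | exact: ZadjM]. Qed.

Lemma Zadj_nat n : Zadj n%:R.
Proof. by exists n%:R; rewrite rmorph_nat hornerMn hornerC. Qed.

Lemma Zadj_sum I (r : seq I) (Q : pred I) (f : I -> R) :
  (forall i, Q i -> Zadj (f i)) -> Zadj (\sum_(i <- r | Q i) f i).
Proof. by move=> Zf; elim/big_rec: _ => [|i x Qi Zx]; [exact: Zadj0 | apply: ZadjD; auto]. Qed.

End IntPolyClosure.

Section IdealCongruence.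
Variables (R I : algC -> Prop).
Hypothesis idealI : is_ideal_in R I.

Definition eqmod (x y : algC) : Prop := I (x - y).

Lemma ideal_sub x : I x -> R x. Proof. by case: idealI => sIR _; apply: sIR. Qed.
Lemma ideal0 : I 0. Proof. by case: idealI => _ [I0 _]. Qed.
Lemma idealB x y : I x -> I y -> I (x - y). Proof. by case: idealI => _ [_ [IB _]]; apply: IB. Qed.
Lemma idealM r x : R r -> I x -> I (r * x). Proof. by case: idealI => _ [_ [_ IM]]; apply: IM. Qed.

Lemma idealN x : I x -> I (- x).
Proof. by move=> Ix; rewrite -sub0r; apply: idealB => //; apply: ideal0. Qed.

Lemma idealD x y : I x -> I y -> I (x + y).
Proof. by move=> Ix /idealN Iy; have := idealB Ix Iy; rewrite opprK. Qed.

Lemma eqmod_sym x y : eqmod x y -> eqmod y x.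
Proof. by move=> Ixy; rewrite /eqmod -opprB; apply: idealN. Qed.

Lemma eqmod_trans y x z : eqmod x y -> eqmod y z -> eqmod x z.
Proof. by move=> Ixy Iyz; have := idealD Ixy Iyz; rewrite /eqmod addrA subrK. Qed.

Lemma eqmod0 x : eqmod x 0 <-> I x. Proof. by rewrite /eqmod subr0. Qed.

Lemma eqmodD x y x' y' : eqmod x x' -> eqmod y y' -> eqmod (x + y) (x' + y').
Proof. by move=> Ix Iy; have := idealD Ix Iy; rewrite /eqmod opprD addrACA. Qed.

Lemma eqmodM x y x' y' :
  R x -> R y' -> eqmod x x' -> eqmod y y' -> eqmod (x * y) (x' * y').
Proof.
move=> Rx Ry' Ix Iy; have := idealD (idealM Rx Iy) (idealM Ry' Ix).
by rewrite /eqmod !mulrBr [y' * _]mulrC [y' * x']mulrC addrA subrK.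
Qed.

Lemma ideal_in4P_iff A E : 4 * A = - E -> I A <-> in4P I E.
Proof.
move=> def4A; have nz4 : (4 : algC) != 0 by rewrite pnatr_eq0.
split=> [IA | [y Iy defE]]; first by exists (- A); [apply: idealN | rewrite mulrN def4A opprK].
suff -> : A = - y by apply: idealN.
by apply: (mulfI nz4); rewrite def4A defE mulrN.
Qed.

End IdealCongruence.

Lemma mulX_horner_deriv_pchar2 (L : fieldType) (b : L) (T : nat) (c : nat -> bool) :
  2 \in [pchar L] ->
  b * ((\poly_(n < T) (c n)%:R : {poly L})^`()).[b] =
  \sum_(n < T) (odd n && c n)%:R * b ^+ n.
Proof.
move=> pchar2; set p := \poly_(n < T) _.
have size_p : (size p <= T)%N by apply: size_poly.
have size_p' : (size p^`() <= T)%N.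
  have [->|p_neq0] := eqVneq p 0; first by rewrite deriv0 size_poly0.
  exact: leq_trans (ltnW (lt_size_deriv p_neq0)) size_p.
pose g n := p`_n *+ n * b ^+ n.
rewrite (horner_coef_wide _ size_p') big_distrr /=.
transitivity (\sum_(n < T.+1) g n).
  rewrite big_ord_recl /g mulr0n mul0r add0r; apply: eq_bigr => i _.
  by rewrite coef_deriv exprS mulrCA.
rewrite big_ord_recr /= /g coef_poly ltnn mul0rn mul0r addr0.
apply: eq_bigr => i _; rewrite coef_poly ltn_ord; congr (_ * _).
case: (c i); last by rewrite mul0rn andbF.
by rewrite andbT -[LHS](GRing.natr_mod_pchar pchar2) modn2.
Qed.

Lemma sum_expr_eq0 (R : idomainType) (x : R) n :
  x ^+ n = 1 -> x != 1 -> \sum_(i < n) x ^+ i = 0.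
Proof.
move=> xn1 x_neq1; have /esym/eqP := subrX1 x n.
by rewrite xn1 subrr mulf_eq0 subr_eq0 (negbTE x_neq1) => /eqP.
Qed.

Lemma expr_half_eq1 (R : pzSemiRingType) (z : R) k T :
  odd k -> (k %| T)%N -> ~~ odd T -> z ^+ k = 1 -> z ^+ (T %/ 2) = 1.
Proof.
move=> k_odd kT T_even zk; have : (k %| T %/ 2)%N.
  by rewrite -(Gauss_dvdl _ (_ : coprime k 2)) ?coprimen2 ?divnK ?dvdn2.
by case/dvdnP=> c ->; rewrite mulnC exprM zk expr1n.
Qed.

Section ResidueFieldIso.
Variables (L : fieldType) (beta : L) (w zeta : algC) (P : algC -> Prop) (phi : L -> algC).
Hypothesis idealP : is_ideal_in (Zadj w) P.
Hypothesis iso : is_iso_to_quot beta (Zadj w) P phi.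
Hypothesis phi_beta : P (phi beta - zeta).

Lemma phi_Zadj x : Zadj beta x -> Zadj w (phi x). Proof. by case: iso => Zphi _; apply: Zphi. Qed.

Lemma phiD x y : Zadj beta x -> Zadj beta y -> eqmod P (phi (x + y)) (phi x + phi y).
Proof. by case: iso => _ [phiD _]; apply: phiD. Qed.

Lemma phiM x y : Zadj beta x -> Zadj beta y -> eqmod P (phi (x * y)) (phi x * phi y).
Proof. by case: iso => _ [_ [phiM _]]; apply: phiM. Qed.

Lemma phi1 : eqmod P (phi 1) 1. Proof. by case: iso => _ [_ [_ []]]. Qed.

Lemma phi_inj x y : Zadj beta x -> Zadj beta y -> eqmod P (phi x) (phi y) -> x = y.
Proof. by case: iso => _ [_ [_ [_ [phi_inj _]]]]; apply: phi_inj. Qed.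

Lemma phi0 : eqmod P (phi 0) 0.
Proof.
have := phiD (Zadj0 beta) (Zadj0 beta).
by rewrite addr0 /eqmod opprD addrA subrr add0r subr0 => /(idealN idealP); rewrite opprK.
Qed.

Lemma zeta_Zadj : Zadj w zeta.
Proof.
rewrite -[zeta](subKr (phi beta)).
exact: ZadjB (phi_Zadj (Zadj_gen beta)) (ideal_sub idealP phi_beta).
Qed.

Lemma phiX n : eqmod P (phi (beta ^+ n)) (zeta ^+ n).
Proof.
elim: n => [|n IHn]; first by rewrite !expr0; apply: phi1.
rewrite !exprSr; apply: (eqmod_trans idealP (phiM (ZadjX n (Zadj_gen beta)) (Zadj_gen beta))).
apply: (eqmodM idealP) => //; [exact: phi_Zadj (ZadjX n (Zadj_gen beta)) | exact: zeta_Zadj].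
Qed.

Lemma phi_bool (d : bool) : eqmod P (phi d%:R) d%:R.
Proof. by case: d; [exact: phi1 | exact: phi0]. Qed.

Lemma phi_sum T (d : nat -> bool) :
  eqmod P (phi (\sum_(n < T) (d n)%:R * beta ^+ n)) (\sum_(n < T) (d n)%:R * zeta ^+ n).
Proof.
have Zterm n : Zadj beta ((d n)%:R * beta ^+ n).
  exact: ZadjM (Zadj_nat _ _) (ZadjX n (Zadj_gen beta)).
elim: T => [|T IHT]; first by rewrite !big_ord0; apply: phi0.
have Zsum : Zadj beta (\sum_(n < T) (d n)%:R * beta ^+ n) by apply: Zadj_sum => n _.
rewrite !big_ord_recr /=; apply: (eqmod_trans idealP (phiD Zsum (Zterm T))).
apply: (eqmodD idealP IHT).
apply: (eqmod_trans idealP (phiM (Zadj_nat _ _) (ZadjX T (Zadj_gen beta)))).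
apply: (eqmodM idealP); first exact: phi_Zadj (Zadj_nat _ _).
- exact: ZadjX zeta_Zadj.
- exact: phi_bool.
- exact: phiX.
Qed.

Lemma sum_expr_eq0_iff T (d : nat -> bool) :
  \sum_(n < T) (d n)%:R * beta ^+ n = 0 <-> P (\sum_(n < T) (d n)%:R * zeta ^+ n).
Proof.
have phi_sumT := phi_sum T d; split=> [B0 | PA].
  rewrite B0 in phi_sumT; rewrite -eqmod0.
  exact: (eqmod_trans idealP (eqmod_sym idealP phi_sumT) phi0).
apply: phi_inj (Zadj0 beta) _.
  by apply: Zadj_sum => n _; apply: ZadjM (Zadj_nat _ _) (ZadjX n (Zadj_gen beta)).
apply: (eqmod_trans idealP phi_sumT); apply: (eqmod_trans idealP _ (eqmod_sym idealP phi0)).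
by rewrite eqmod0.
Qed.

Lemma zeta_neq_pm1 : beta != 1 -> P 2 -> zeta != 1 /\ zeta != -1.
Proof.
move=> beta_neq1 P2.
suff phi_beta_neq1 : ~ eqmod P (phi beta) 1.
  split; apply/eqP=> zeta_pm1; apply: phi_beta_neq1; first by rewrite /eqmod -zeta_pm1.
  (* -1 = 1 modulo P since 2 is in P *)
  apply: (eqmod_trans idealP (y := -1)); first by rewrite /eqmod -zeta_pm1.
  by rewrite /eqmod -opprD -mulr2n; apply: (idealN idealP).
move=> phi_beta1; move/eqP: beta_neq1; apply.
apply: phi_inj (Zadj_gen beta) (Zadj1 beta) _.
exact: (eqmod_trans idealP phi_beta1 (eqmod_sym idealP phi1)).
Qed.

End ResidueFieldIso.

Section QuadraticCharacterSums.
Variables (F : finFieldType) (alpha : F) (zeta : algC).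
Local Notation T := #|F|.-1.
Hypothesis prim_alpha : T.-primitive_root alpha.
Hypothesis T_even : ~~ odd T.
Hypothesis zeta_half : zeta ^+ (T %/ 2) = 1.

Lemma T_gt0 : (0 < T)%N. Proof. exact: prim_order_gt0 prim_alpha. Qed.
Lemma card_finF : #|F| = T.+1. Proof. by have := T_gt0; case: #|F|. Qed.
Lemma dvd2T : (2 %| T)%N. Proof. by rewrite dvdn2. Qed.

Lemma zeta_expT : zeta ^+ T = 1.
Proof. by rewrite -(divnK dvd2T) exprM zeta_half expr1n. Qed.

Lemma alpha_neq0 : alpha != 0.
Proof. by rewrite (prim_root_eq0 prim_alpha) -lt0n T_gt0. Qed.

Lemma exists_alpha_exp (x : F) : x != 0 -> exists n : 'I_T, x = alpha ^+ n.
Proof.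
move=> x_neq0; have xT1 : x ^+ T = 1.
  by apply: (mulIf x_neq0); rewrite mul1r -exprSr -card_finF expf_card.
by have [n ->] := prim_rootP prim_alpha xT1; exists n.
Qed.

Lemma alpha_half : alpha ^+ (T %/ 2) = -1.
Proof.
have: alpha ^+ (T %/ 2) != 1.
  rewrite -(prim_order_dvd prim_alpha) gtnNdvd //; have := T_gt0; have := divnK dvd2T; lia.
have : (alpha ^+ (T %/ 2)) ^+ 2 == 1 by rewrite -exprM divnK ?dvd2T ?prim_expr_order.
by rewrite sqrf_eq1 => /orP[->|/eqP].
Qed.

Lemma sum_finF (f : F -> algC) : \sum_(x : F) f x = f 0 + \sum_(n < T) f (alpha ^+ n).
Proof.
rewrite (bigD1 0) //=; congr (_ + _).
have inj_exp : {in [set: 'I_T] &, injective (fun n : 'I_T => alpha ^+ n)}.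
  by move=> a b _ _ /eqP; rewrite (eq_prim_root_expr prim_alpha) !modn_small // => /eqP/val_inj.
have -> : \sum_(n < T) f (alpha ^+ n) = \sum_(n in [set: 'I_T]) f (alpha ^+ n).
  by apply: eq_bigl => n; rewrite in_setT.
rewrite -(big_imset _ inj_exp) /=; apply: eq_bigl => x; apply/idP/imsetP.
  by case/exists_alpha_exp=> n ->; exists n; rewrite ?in_setT.
by case=> n _ ->; apply: expf_neq0 alpha_neq0.
Qed.

Lemma chi_exp j : chi alpha zeta (alpha ^+ j) = zeta ^+ j.
Proof.
rewrite /chi; case: pickP => [n /eqP alpha_n | none].
  have := eq_prim_root_expr prim_alpha n j; rewrite alpha_n eqxx => /esym/eqP nj_modT.
  by rewrite -(expr_mod n zeta_expT) nj_modT (expr_mod j zeta_expT).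
by have := none (Ordinal (ltn_pmod j T_gt0)); rewrite /= (prim_expr_mod prim_alpha) eqxx.
Qed.

Lemma chi0 : chi alpha zeta 0 = 0.
Proof.
rewrite /chi; case: pickP => [n /eqP alpha_n | //].
by have := expf_neq0 n alpha_neq0; rewrite alpha_n eqxx.
Qed.

Lemma rho0 : rho (0 : F) = 0. Proof. by rewrite /rho eqxx. Qed.

Lemma rho_exp j : rho (alpha ^+ j) = (-1) ^+ j.
Proof.
rewrite /rho (negbTE (expf_neq0 j alpha_neq0)) -signr_odd.
case: (boolP [exists y, y ^+ 2 == alpha ^+ j]) => [/existsP[y /eqP y2] | nosq].
  have y_neq0 : y != 0.
    by apply: (contraNneq _ (expf_neq0 j alpha_neq0)) => y0; rewrite -y2 y0 expr0n.
  have [i def_y] := exists_alpha_exp y_neq0.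
  (* alpha^(2i) = alpha^j forces j = 2i mod T, hence j even since T is *)
  have := eq_prim_root_expr prim_alpha (i * 2) j; rewrite exprM -def_y y2 eqxx.
  move=> /esym/eqP/(congr1 (modn^~ 2)); rewrite !(modn_dvdm _ dvd2T) modnMl modn2.
  by case: (odd j).
case odd_j: (odd j) => //; case/negP: nosq; apply/existsP; exists (alpha ^+ (j %/ 2)).
by rewrite -exprM divnK // dvdn2 odd_j.
Qed.

Lemma chiN (x : F) : chi alpha zeta (- x) = chi alpha zeta x.
Proof.
have [->|x_neq0] := eqVneq x 0; first by rewrite oppr0.
have [n ->] := exists_alpha_exp x_neq0.
by rewrite -mulN1r -alpha_half -exprD !chi_exp exprD zeta_half mul1r.
Qed.

Lemma rhoN (x : F) : rho (- x) = rho (-1 : F) * rho x.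
Proof.
have [->|x_neq0] := eqVneq x 0; first by rewrite oppr0 rho0 mulr0.
have [n ->] := exists_alpha_exp x_neq0.
by rewrite -[- alpha ^+ n]mulN1r -alpha_half -exprD !rho_exp exprD.
Qed.

Lemma rhoN1 : rho (-1 : F) = (-1) ^+ (T %/ 2). Proof. by rewrite -alpha_half rho_exp. Qed.

Lemma rho_pm1 (x : F) : x != 0 -> rho x = 1 \/ rho x = -1.
Proof. by rewrite /rho => /negbTE ->; case: [exists _, _]; [left | right]. Qed.

Lemma slce_rho n : slce alpha n = (rho (alpha ^+ n + 1) == -1).
Proof.
rewrite /slce /rho; case: eqP => _ /=; first by rewrite eq_sym oppr_eq0 oner_eq0.
by case: [exists _, _]; rewrite /= ?eqxx // -addr_eq0 -mulr2n mulrn_eq0 oner_eq0.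
Qed.

Lemma odd_rho_exp n : odd n = (rho (alpha ^+ n) == -1).
Proof.
rewrite rho_exp -signr_odd; case: (odd n); rewrite ?eqxx //.
by rewrite expr0 -addr_eq0 -mulr2n mulrn_eq0 oner_eq0.
Qed.

Lemma sum_rho_addr1_chi :
  \sum_(x : F) rho (x + 1) * chi alpha zeta x = Ksum (chi alpha zeta).
Proof.
have inj_1B : injective (fun y : F => 1 - y) by move=> a b /addrI/oppr_inj.
rewrite (reindex_inj (@oppr_inj _)) /Ksum [RHS](reindex_inj inj_1B) /=.
by apply: eq_bigr => y _; rewrite subKr chiN addrC.
Qed.

Lemma sum_rho_rho_addr1_chi :
  \sum_(x : F) rho x * rho (x + 1) * chi alpha zeta x =
  rho (-1 : F) * Ksum (fun x => rho x * chi alpha zeta x).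
Proof.
have inj_1B : injective (fun y : F => 1 - y) by move=> a b /addrI/oppr_inj.
rewrite (reindex_inj (@oppr_inj _)) /Ksum mulr_sumr [RHS](reindex_inj inj_1B) /=.
by apply: eq_bigr => y _; rewrite subKr chiN rhoN addrC; ring.
Qed.

Hypotheses (zeta_neq1 : zeta != 1) (zeta_neqN1 : zeta != -1).

Lemma sum_chi : \sum_(x : F) chi alpha zeta x = 0.
Proof.
rewrite sum_finF chi0 add0r; under eq_bigr do rewrite chi_exp.
exact: sum_expr_eq0 zeta_expT zeta_neq1.
Qed.

Lemma sum_rho_chi : \sum_(x : F) rho x * chi alpha zeta x = 0.
Proof.
rewrite sum_finF chi0 mulr0 add0r; under eq_bigr do rewrite chi_exp rho_exp -exprMn.
apply: sum_expr_eq0; first by rewrite exprMn zeta_expT mulr1 -signr_odd (negbTE T_even).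
by rewrite mulN1r eqr_oppLR.
Qed.

Lemma four_indicator_chi (x : F) :
  4 * (((rho x == -1) && (rho (x + 1) == -1))%:R * chi alpha zeta x) =
  (1 - rho x) * (1 - rho (x + 1)) * chi alpha zeta x
   - (x == -1)%:R * ((1 - rho x) * chi alpha zeta x).
Proof.
have neqN1 : (1 : algC) == -1 = false by rewrite -addr_eq0 -mulr2n mulrn_eq0 oner_eq0.
have [->|x_neq0] := eqVneq x 0; first by rewrite chi0 !mulr0 subrr.
have [->|x_neqN1] := eqVneq x (-1).
  by rewrite addNr rho0 [(0 : algC) == _]eq_sym oppr_eq0 oner_eq0 andbF /=; ring.
have x1_neq0 : x + 1 != 0 by rewrite addr_eq0.
by have [->|->] := rho_pm1 x_neq0; have [->|->] := rho_pm1 x1_neq0;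
  rewrite ?eqxx ?neqN1 /=; ring.
Qed.

Lemma four_sum_odd_slce_rhoN1 :
  4 * \sum_(n < T) (odd n && slce alpha n)%:R * zeta ^+ n =
  - Ksum (chi alpha zeta) + rho (-1 : F) * Ksum (fun x => rho x * chi alpha zeta x)
  - (1 - rho (-1 : F)).
Proof.
have -> : \sum_(n < T) (odd n && slce alpha n)%:R * zeta ^+ n =
    \sum_(x : F) ((rho x == -1) && (rho (x + 1) == -1))%:R * chi alpha zeta x.
  by rewrite sum_finF chi0 mulr0 add0r; apply: eq_bigr => n _; rewrite chi_exp odd_rho_exp slce_rho.
rewrite mulr_sumr; under eq_bigr do rewrite four_indicator_chi.
rewrite sumrB.
have -> : \sum_(x : F) (x == -1)%:R * ((1 - rho x) * chi alpha zeta x) = 1 - rho (-1 : F).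
  rewrite (bigD1 (-1)) //= eqxx mul1r big1 => [|x /negbTE ->]; last by rewrite mul0r.
  by rewrite chiN -(expr0 alpha) chi_exp expr0 mulr1 addr0.
have expand (x : F) : (1 - rho x) * (1 - rho (x + 1)) * chi alpha zeta x =
    chi alpha zeta x - rho x * chi alpha zeta x - rho (x + 1) * chi alpha zeta x
    + rho x * rho (x + 1) * chi alpha zeta x by ring.
under eq_bigr do rewrite expand.
rewrite big_split /= !sumrB sum_chi sum_rho_chi sum_rho_addr1_chi.
by rewrite sum_rho_rho_addr1_chi; ring.
Qed.

Lemma four_sum_odd_slce :
  4 * \sum_(n < T) (odd n && slce alpha n)%:R * zeta ^+ n =
  - (if (#|F| %% 4 == 1)%N
     then Ksum (chi alpha zeta) - Ksum (fun x => rho x * chi alpha zeta x)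
     else 2 + Ksum (chi alpha zeta) + Ksum (fun x => rho x * chi alpha zeta x)).
Proof.
have card_mod4 : (#|F| %% 4 == 1)%N = ~~ odd (T %/ 2).
  have : (#|F| = (T %/ 2 * 2).+1)%N by rewrite divnK ?dvd2T // card_finF.
  move: (T %/ 2)%N => h ->; have := modn2 h.
  by case: (odd h) => /= h_mod2; [apply/negbTE/eqP | apply/eqP]; lia.
rewrite four_sum_odd_slce_rhoN1 rhoN1 card_mod4 -signr_odd.
by case: odd; rewrite /= ?expr0 ?expr1; ring.
Qed.

End QuadraticCharacterSums.

Theorem mainTheorem3
  (p m : nat) (F : finFieldType) (alpha : F)
  (L : fieldType) (beta : L) (k : nat)
  (P : algC -> Prop) (phi : L -> algC) (zeta : algC) :
  prime p -> odd p -> (0 < m)%N -> #|F| = (p ^ m)%N ->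
  (#|F|.-1).-primitive_root alpha ->
  2 \in [pchar L] ->
  beta ^+ (#|F|.-1) = 1 -> k.-primitive_root beta -> (1 < k)%N ->
  is_prime_ideal_in (Zzeta k) P -> P 2 ->
  is_iso_to_quot beta (Zzeta k) P phi ->
  zeta ^+ k = 1 -> P (phi beta - zeta) ->
  (hasse (slcePoly alpha L) 1).[beta] = 0 <->
  (if (#|F| %% 4 == 1)%N
   then in4P P (Ksum (chi alpha zeta) - Ksum (fun x => rho x * chi alpha zeta x))
   else in4P P (2 + Ksum (chi alpha zeta) + Ksum (fun x => rho x * chi alpha zeta x))).
Proof.
move=> _ p_odd _ cardF prim_alpha pchar2 betaT prim_beta k_gt1 [idealP _] P2 iso zetak phi_beta.
have T_even : ~~ odd #|F|.-1.
  have : odd #|F| by rewrite cardF oddX p_odd orbT.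
  by case: #|F|.
have k_odd : odd k.
  by apply: contraLR pchar2; rewrite -dvdn2 => /(prim_root_pcharF prim_beta) ->.
have kT : (k %| #|F|.-1)%N by rewrite (prim_order_dvd prim_beta) betaT.
have zeta_half := expr_half_eq1 k_odd kT T_even zetak.
have beta_neq1 : beta != 1.
  apply: contraTneq k_gt1 => beta1.
  by have := prim_order_dvd prim_beta 1; rewrite beta1 expr1n eqxx dvdn1 => /eqP ->.
have [zeta_neq1 zeta_neqN1] := zeta_neq_pm1 idealP iso phi_beta beta_neq1 P2.
have beta_neq0 : beta != 0.
  by rewrite (prim_root_eq0 prim_beta) -lt0n (prim_order_gt0 prim_beta).
rewrite -fun_if; apply: iff_trans (ideal_in4P_iff idealP
  (four_sum_odd_slce prim_alpha T_even zeta_half zeta_neq1 zeta_neqN1)).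
apply: iff_trans (sum_expr_eq0_iff idealP iso phi_beta _ (fun n => odd n && slce alpha n)).
rewrite -(mulX_horner_deriv_pchar2 beta _ (slce alpha) pchar2) /hasse nderivn1.
by split=> [-> | /eqP]; rewrite ?mulr0 // mulf_eq0 (negbTE beta_neq0) => /eqP.
Qed.
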